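(* Let $\mathbf{C}$ be a category of $\mathbf{FI}$ type and $M_\bullet=\bigoplus_i\mathrm{Ind}_{c_i}(V_i)$ a free $\mathbf{C}$-module of degree $\leq c$. Then in the coinvariant $\mathbf{C}$-module $d\mapsto M_d/G_d$, every map induced by a morphism of $\mathbf{C}$ is injective, and every map induced by a morphism $d\to e$ between objects with $c\leq d$ is an isomorphism. Moreover, for every object $d$ with $c_i\leq d$ for all $i$, one has $M_d/G_d\cong\bigoplus_i V_i/G_{c_i}$.
   Context: A category $\mathbf{C}$ is of $\mathbf{FI}$ type if: (1) all Hom-sets are finite; (2) every morphism is a monomorphism and every endomorphism is an isomorphism; (3) for all objects $c,d$ the group $G_d=\mathrm{Aut}_{\mathbf{C}}(d)$ acts transitively on $\mathrm{Hom}_{\mathbf{C}}(c,d)$; (4) for every $d$ only finitely many isomorphism classes of $c$ have $\mathrm{Hom}(c,d)\neq\emptyset$; (5) every pair $c_1\to d\leftarrow c_2$ has a pullback, and every pair $f_i:p\to c_i$ has a weak push-out, i.e. a commutative pullback square $g_i:c_i\to d$ such that for every other pullback square $h_i:c_i\to z$ with $h_1f_1=h_2f_2$ there is a unique $h:d\to z$ with $hg_i=h_i$. Write $c\leq d$ if $\mathrm{Hom}(c,d)\neq\emptyset$. A $\mathbf{C}$-module is a functor to complex vector spaces. For a finite-dimensional $G_c$-representation $V$, $\mathrm{Ind}_c(V)$ is $d\mapsto\mathbb{C}[\mathrm{Hom}(c,d)]\otimes_{\mathbb{C}[G_c]}V$. A free module is a finite direct sum of these, of degree $\leq d$ if each summand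 $\mathrm{Ind}_c(V)$ ($V\neq0$) has $c\leq d$. $W/G$ denotes coinvariants; for a $\mathbf{C}$-module these form a $\mathbf{C}$-module. *)

From HB Require Import structures.
From mathcomp Require Import all_boot all_order all_algebra.
From mathcomp Require Import complex.
From mathcomp Require Import reals.
From Stdlib Require List.

Set Implicit Arguments.
Unset Strict Implicit.
Unset Printing Implicit Defensive.

Import GRing.Theory.
Local Open Scope ring_scope.

Record category := Category {
  Obj : Type;
  Mor : Obj -> Obj -> finType;
  idm : forall a, Mor a a;
  hcomp : forall a b c, Mor b c -> Mor a b -> Mor a c;
  hcompA : forall a b c d (h : Mor c d) (g : Mor b c) (f : Mor a b),
      hcomp h (hcomp g f) = hcomp (hcomp h g) f;
  hcomp1m : forall a b (f : Mor a b), hcomp (idm b) f = f;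
  hcompm1 : forall a b (f : Mor a b), hcomp f (idm a) = f }.

Arguments Mor : clear implicits.
Arguments idm {_} a.
Arguments hcomp {_ a b c} g f.

Section CatDefs.
Variable C : category.

Definition obj_le (c d : Obj C) : Prop := inhabited (Mor C c d).

Definition obj_iso (c d : Obj C) : Prop :=
  exists (f : Mor C c d) (g : Mor C d c), hcomp g f = idm c /\ hcomp f g = idm d.

Definition is_pullback (c1 c2 d p : Obj C) (g1 : Mor C c1 d) (g2 : Mor C c2 d)
    (f1 : Mor C p c1) (f2 : Mor C p c2) : Prop :=
  hcomp g1 f1 = hcomp g2 f2 /\
  forall q (h1 : Mor C q c1) (h2 : Mor C q c2), hcomp g1 h1 = hcomp g2 h2 ->
    exists! h : Mor C q p, hcomp f1 h = h1 /\ hcomp f2 h = h2.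

Definition is_weak_pushout (p c1 c2 d : Obj C) (f1 : Mor C p c1) (f2 : Mor C p c2)
    (g1 : Mor C c1 d) (g2 : Mor C c2 d) : Prop :=
  is_pullback g1 g2 f1 f2 /\
  forall z (h1 : Mor C c1 z) (h2 : Mor C c2 z), is_pullback h1 h2 f1 f2 ->
    exists! h : Mor C d z, hcomp h g1 = h1 /\ hcomp h g2 = h2.

Definition is_auto (d : Obj C) (s : Mor C d d) : Prop :=
  exists t : Mor C d d, hcomp s t = idm d /\ hcomp t s = idm d.

Definition FI_type : Prop :=
  [/\
      (forall a b x (g : Mor C a b) (f1 f2 : Mor C x a),
          hcomp g f1 = hcomp g f2 -> f1 = f2),
      (forall d (s : Mor C d d), is_auto s),
      (forall c d (f g : Mor C c d), exists2 s : Mor C d d, is_auto s & hcomp s f = g),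
      (forall d, exists n (cs : 'I_n -> Obj C),
          forall c, obj_le c d -> exists i, obj_iso (cs i) c) &
      (forall c1 c2 d (g1 : Mor C c1 d) (g2 : Mor C c2 d),
          exists p (f1 : Mor C p c1) (f2 : Mor C p c2), is_pullback g1 g2 f1 f2) /\
      (forall p c1 c2 (f1 : Mor C p c1) (f2 : Mor C p c2),
          exists d (g1 : Mor C c1 d) (g2 : Mor C c2 d), is_weak_pushout f1 f2 g1 g2) ].
(* (1) finiteness of Hom-sets is built into [category] (Hom is a finType). *)

End CatDefs.

(* W / U is modelled by the complement U^C, with quotient map the      *)
(* projection onto U^C along U (a surjective linear map, kernel U).    *)

Section Quot.
Variables (K : fieldType) (W : vectType K) (U : {vspace W}).
Definition quot := subvs_of (U^C)%VS.
Definition qpi (w : W) : quot := vsproj (U^C)%VS (daddv_pi (U^C)%VS U w).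
End Quot.

Record grep (C : category) (K : fieldType) (c : Obj C) := GRep {
  gV : vectType K;
  grho : Mor C c c -> 'End(gV);
  grho1 : grho (idm c) = \1%VF;
  grhoM : forall g h, grho (hcomp g h) = (grho g \o grho h)%VF }.

Record summand (C : category) (K : fieldType) := Summand {
  sobj : Obj C;
  srep : grep K sobj }.

Section Ind.
Variables (C : category) (K : fieldType) (c : Obj C) (V : grep K c).

(* C[Hom(c,d)] (x) V, as V-valued functions on Hom(c,d) *)
Definition pre_ind (d : Obj C) := {ffun Mor C c d -> gV V}.

Definition tens d (f : Mor C c d) (v : gV V) : pre_ind d :=
  [ffun f' => if f' == f then v else 0].

(* relations  (f g) (x) v - f (x) (g v)  defining  (x)_{C[G_c]} *)
Definition ind_rel d : {vspace pre_ind d} :=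
  (\sum_(f : Mor C c d) \sum_(g : Mor C c c)
     limg (linfun (fun v : gV V => tens (hcomp f g) v - tens f (grho V g v))))%VS.

Definition ind d := quot (ind_rel d).

(* action of a morphism f : d -> e :  h (x) v  |->  (f h) (x) v *)
Definition pre_ind_map d e (f : Mor C d e) (x : pre_ind d) : pre_ind e :=
  [ffun h' : Mor C c e => \sum_(h : Mor C c d | hcomp f h == h') x h].

Definition ind_map d e (f : Mor C d e) (x : ind d) : ind e :=
  qpi (ind_rel e) (pre_ind_map f (vsval x)).

Definition rep_coinv := quot (\sum_(g : Mor C c c) limg (grho V g - \1%VF))%VS.

End Ind.

Section Free.
Variables (C : category) (K : fieldType).

Fixpoint fmod (l : seq (summand C K)) (d : Obj C) : vectType K :=
  match l with
  | [::] => Vector.clone K 'rV[K]_0 _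
  | s :: l' => Vector.clone K (ind (srep s) d * fmod l' d)%type _
  end.

Fixpoint fmod_map (l : seq (summand C K)) d e (f : Mor C d e) : fmod l d -> fmod l e :=
  match l return fmod l d -> fmod l e with
  | [::] => fun x => x
  | s :: l' => fun x => (ind_map f x.1, @fmod_map l' d e f x.2)
  end.

Definition coinv_rel l d : {vspace fmod l d} :=
  (\sum_(s : Mor C d d) limg (linfun (fun x : fmod l d => fmod_map s x - x)))%VS.

Definition coinv l d := quot (coinv_rel l d).

Definition coinv_map l d e (f : Mor C d e) (x : coinv l d) : coinv l e :=
  qpi (coinv_rel l e) (fmod_map f (vsval x)).

Fixpoint rep_coinv_sum (l : seq (summand C K)) : vectType K :=
  match l with
  | [::] => Vector.clone K 'rV[K]_0 _
  | s :: l' => Vector.clone K (rep_coinv (srep s) * rep_coinv_sum l')%type _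
  end.

End Free.

Arguments fmod_map {C K} l {d e} f x.
Arguments coinv_map {C K} l {d e} f x.

(* The augmentation map Ind_c(V)_d -> V/G_c, h (x) v |-> [v], is invariant under
   all morphisms and kills the relations s y - y (s in G_d), so it factors through
   the coinvariants. Conversely its kernel consists of such relations: as G_d acts
   transitively on Hom(c, d), h (x) v - h0 (x) v = s (h0 (x) v) - h0 (x) v for a fixed
   h0, and h0 (x) (g v - v) = (h0 g) (x) v - h0 (x) v. The augmentation is onto once
   Hom(c, d) is nonempty. Summing over the summands gives isomorphisms
   M_d/G_d ~ (+)_i V_i/G_{c_i}, natural in d, as soon as d lies above every c_i with
   V_i <> 0; every induced map on coinvariants is then injective, and bijective
   above c. *)

From HB Require Import structures.
From mathcomp Require Import all_boot all_order all_algebra.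
From mathcomp Require Import complex reals.

Set Implicit Arguments.
Unset Strict Implicit.
Unset Printing Implicit Defensive.
Import GRing.Theory.
Local Open Scope ring_scope.

Section LinearSpans.
Variables (K : fieldType) (A B : vectType K).

Lemma linfun_linearE (f : A -> B) : linear f -> linfun f =1 f.
Proof.
move=> f_lin x.
pose fL : {linear A -> B} := HB.pack f (GRing.isLinear.Build _ _ _ _ f f_lin).
exact: (lfunE fL x).
Qed.

Lemma memv_sumv_lin (I : finType) (U : I -> {vspace A}) (L : {linear A -> B})
    (T : {vspace B}) x :
  (forall i u, u \in U i -> L u \in T) -> x \in (\sum_i U i)%VS -> L x \in T.
Proof.
move=> LU; have sub_preim : (\sum_i U i <= linfun L @^-1: T)%VS.
  by apply/subv_sumP => i _; apply/subvP => u /(LU i); rewrite -memv_preim lfunE.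
by move/(subvP sub_preim); rewrite -memv_preim lfunE.
Qed.

Lemma memv_sum_limg_lin (A0 : vectType K) (I : finType) (f : I -> 'Hom(A0, A))
    (L : {linear A -> B}) (T : {vspace B}) x :
  (forall i v, L (f i v) \in T) -> x \in (\sum_i limg (f i))%VS -> L x \in T.
Proof. by move=> Lf; apply: memv_sumv_lin => i _ /memv_imgP[v _ ->]. Qed.

Lemma memv_sum_limg (A0 : vectType K) (I : finType) (f : I -> 'Hom(A0, A)) i v :
  f i v \in (\sum_i limg (f i))%VS.
Proof. exact: subvP (sumv_sup i isT (subvv _)) _ (memv_img _ (memvf v)). Qed.

Lemma vect_dim0 : \dim {:A} = 0%N -> forall x : A, x = 0.
Proof.
by move=> /eqP; rewrite dimv_eq0 => /eqP A0 x; apply/eqP; rewrite -memv0 -A0 memvf.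
Qed.

Lemma linear_bijective (f : {linear A -> B}) :
  injective f -> (forall y, exists x, f x = y) -> bijective f.
Proof.
move=> f_inj f_surj; have f_limg y : y \in limg (linfun f).
  by have [x <-] := f_surj y; rewrite -lfunE memv_img ?memvf.
exists ((linfun f)^-1)%VF => [x|y]; last by rewrite -lfunE limg_lfunVK.
by apply: f_inj; rewrite -lfunE limg_lfunVK.
Qed.

End LinearSpans.

Section Quotient.
Variables (K : fieldType) (W : vectType K) (U : {vspace W}).

Lemma qpi_is_linear : linear (qpi U).
Proof. by move=> a x y; rewrite /qpi !linearP. Qed.
HB.instance Definition _ :=
  GRing.isLinear.Build K W (quot U) _ (qpi U) qpi_is_linear.

Lemma capv_complC : (U^C :&: U = 0)%VS.
Proof. by rewrite capvC capv_compl. Qed.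

Lemma qpi_vsval : cancel (@vsval _ _ U^C) (qpi U).
Proof. by move=> y; rewrite /qpi daddv_pi_id ?vsvalK ?subvsP ?capv_complC. Qed.

Lemma qpi_eq0 w : (qpi U w == 0) = (w \in U).
Proof.
have w_split : daddv_pi U^C U w + daddv_pi U U^C w = w.
  by apply: daddv_pi_add capv_complC _; rewrite addvC addv_complf memvf.
apply/idP/idP => [/eqP/(congr1 (@vsval _ _ _))|wU].
  by rewrite /qpi vsprojK ?memv_pi // => pi0; rewrite -w_split pi0 add0r memv_pi.
have piU : daddv_pi U U^C w = w by rewrite daddv_pi_id // capv_compl.
move: w_split; rewrite piU /qpi => /(canRL (addrK w)).
by rewrite subrr => ->; rewrite linear0.
Qed.

Lemma qpi_eq u w : (qpi U u == qpi U w) = (u - w \in U).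
Proof. by rewrite -qpi_eq0 linearB subr_eq0. Qed.

Lemma vsval_qpiB w : vsval (qpi U w) - w \in U.
Proof. by rewrite -qpi_eq qpi_vsval. Qed.

Variables (X : vectType K) (F : {linear W -> X}).

Definition qlift (y : quot U) : X := F (vsval y).

Lemma qlift_is_linear : linear qlift.
Proof. by move=> a x y; rewrite /qlift !linearP. Qed.
HB.instance Definition _ :=
  GRing.isLinear.Build K (quot U) X _ qlift qlift_is_linear.

Lemma qlift_qpi : (forall u, u \in U -> F u = 0) -> forall w, qlift (qpi U w) = F w.
Proof. by move=> FU w; apply/eqP; rewrite /qlift -subr_eq0 -linearB FU ?vsval_qpiB. Qed.

Lemma qlift_inj : (forall w, F w = 0 -> w \in U) -> injective qlift.
Proof.
move=> kerF x y Fxy; rewrite -[x]qpi_vsval -[y]qpi_vsval; apply/eqP.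
by rewrite qpi_eq kerF // linearB /= -/(qlift x) Fxy subrr.
Qed.

End Quotient.

Arguments qlift {K W} U {X} F y.

Definition orbit_rel (K : fieldType) (A : vectType K) (I : finType)
    (act : I -> A -> A) : {vspace A} :=
  (\sum_i limg (linfun (fun x => act i x - x)))%VS.

Section OrbitRelation.
Variables (K : fieldType) (A : vectType K) (I : finType) (act : I -> A -> A).
Hypothesis act_lin : forall i, linear (act i).

Lemma act_subid_linear i : linear (fun x => act i x - x).
Proof. by move=> a x y; rewrite act_lin scalerBr addrACA opprD. Qed.

Lemma orbit_rel_subid i x : act i x - x \in orbit_rel act.
Proof.
rewrite -(linfun_linearE (act_subid_linear i)).
exact: (memv_sum_limg (fun i => linfun (fun x => act i x - x))).
Qed.

Lemma orbit_rel_invariant (B : vectType K) (F : {linear A -> B}) x :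
  (forall i x, F (act i x) = F x) -> x \in orbit_rel act -> F x = 0.
Proof.
move=> F_inv x_rel; apply/eqP; rewrite -memv0.
apply: memv_sum_limg_lin x_rel => i v.
rewrite linfun_linearE; last exact: act_subid_linear.
by rewrite /= (raddfB F) /= F_inv subrr mem0v.
Qed.

End OrbitRelation.

Lemma orbit_rel_map (K : fieldType) (A B : vectType K) (I : finType)
    (act : I -> A -> A) (actB : I -> B -> B) (L : {linear A -> B}) x :
  (forall i, linear (act i)) -> (forall i, linear (actB i)) ->
  (forall i x, L (act i x) = actB i (L x)) ->
  x \in orbit_rel act -> L x \in orbit_rel actB.
Proof.
move=> act_lin actB_lin L_eqv; apply: memv_sum_limg_lin => i v.
rewrite linfun_linearE; last exact: act_subid_linear.
by rewrite /= (raddfB L) /= L_eqv orbit_rel_subid.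
Qed.

Lemma obj_le_trans (C : category) (a b e : Obj C) :
  obj_le a b -> obj_le b e -> obj_le a e.
Proof. by move=> [f] [g]; constructor; exact: hcomp g f. Qed.

Section Induced.
Variables (C : category) (K : fieldType) (c : Obj C) (V : grep K c).

Lemma tens_is_linear d (h : Mor C c d) : linear (@tens C K c V d h).
Proof.
move=> a x y; apply/ffunP => h'; rewrite !ffunE.
by case: (h' == h); rewrite ?scaler0 ?addr0.
Qed.
HB.instance Definition _ d h := GRing.isLinear.Build K (gV V) (pre_ind V d) _
  (@tens C K c V d h) (tens_is_linear h).

Lemma pre_ind_map_is_linear d e (f : Mor C d e) : linear (@pre_ind_map C K c V d e f).
Proof.
move=> a x y; apply/ffunP => h; rewrite !ffunE scaler_sumr -big_split /=.
by apply: eq_bigr => i _; rewrite !ffunE.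
Qed.
HB.instance Definition _ d e f := GRing.isLinear.Build K (pre_ind V d) (pre_ind V e) _
  (@pre_ind_map C K c V d e f) (pre_ind_map_is_linear f).

Lemma pre_ind_map_tens d e (f : Mor C d e) (h : Mor C c d) (v : gV V) :
  pre_ind_map f (tens h v) = tens (hcomp f h) v.
Proof.
apply/ffunP => h'; rewrite !ffunE.
rewrite (eq_bigr (fun i => if i == h then v else 0)); last by move=> i _; rewrite ffunE.
rewrite -big_mkcondr /=; case: eqP => [->|ne_h'].
  rewrite (eq_bigl (pred1 h)) ?big_pred1_eq // => i.
  by apply/andP/idP => [[_ //]|/eqP ->]; split.
rewrite big_pred0 // => i; apply/andP => [[/eqP fi /eqP ih]].
by apply: ne_h'; rewrite -fi ih.
Qed.

Lemma pre_ind_sum_tens d (x : pre_ind V d) : x = \sum_h tens h (x h).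
Proof.
apply/ffunP => h'; rewrite sum_ffunE (bigD1 h') //= ffunE eqxx big1 ?addr0 //.
by move=> h /negbTE nh; rewrite ffunE eq_sym nh.
Qed.

Lemma sum_tens d (h : Mor C c d) (v : gV V) : \sum_h' tens h v h' = v.
Proof.
rewrite (bigD1 h) //= ffunE eqxx big1 ?addr0 // => h' /negbTE nh'.
by rewrite ffunE nh'.
Qed.

Definition tens_rel d (h : Mor C c d) (g : Mor C c c) (v : gV V) : pre_ind V d :=
  tens (hcomp h g) v - tens h (grho V g v).

Lemma tens_rel_is_linear d (h : Mor C c d) g : linear (tens_rel h g).
Proof. by move=> a x y; rewrite /tens_rel !linearP /= scalerBr scalerN addrACA. Qed.

Lemma ind_rel_tens_rel d (h : Mor C c d) g v : tens_rel h g v \in ind_rel V d.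
Proof.
apply: (subvP (sumv_sup h isT (subvv _))).
rewrite -(linfun_linearE (tens_rel_is_linear h g)).
exact: (memv_sum_limg (fun g => linfun (tens_rel h g))).
Qed.

Lemma ind_rel_lin d (B : vectType K) (L : {linear pre_ind V d -> B})
    (T : {vspace B}) x :
  (forall h g v, L (tens_rel h g v) \in T) -> x \in ind_rel V d -> L x \in T.
Proof.
move=> LT; apply: memv_sumv_lin => h u; apply: memv_sum_limg_lin => g v.
by rewrite linfun_linearE ?LT //; apply: tens_rel_is_linear.
Qed.

Lemma pre_ind_map_rel d e (f : Mor C d e) x :
  x \in ind_rel V d -> pre_ind_map f x \in ind_rel V e.
Proof.
apply: ind_rel_lin => h g v.
by rewrite /tens_rel linearB /= !pre_ind_map_tens hcompA ind_rel_tens_rel.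
Qed.

Lemma ind_map_is_linear d e (f : Mor C d e) : linear (@ind_map C K c V d e f).
Proof. by move=> a x y; rewrite /ind_map !linearP. Qed.
HB.instance Definition _ d e f := GRing.isLinear.Build K (ind V d) (ind V e) _
  (@ind_map C K c V d e f) (ind_map_is_linear f).

Lemma ind_map_qpi d e (f : Mor C d e) w :
  ind_map f (qpi (ind_rel V d) w) = qpi (ind_rel V e) (pre_ind_map f w).
Proof. by apply/eqP; rewrite /ind_map qpi_eq -linearB pre_ind_map_rel ?vsval_qpiB. Qed.

Definition ind_tens d (h : Mor C c d) (v : gV V) : ind V d :=
  qpi (ind_rel V d) (tens h v).

Lemma ind_tens_is_linear d (h : Mor C c d) : linear (ind_tens h).
Proof. by move=> a x y; rewrite /ind_tens !linearP. Qed.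
HB.instance Definition _ d h := GRing.isLinear.Build K (gV V) (ind V d) _
  (@ind_tens d h) (ind_tens_is_linear h).

Lemma ind_tens_grho d (h : Mor C c d) g v :
  ind_tens h (grho V g v) = ind_tens (hcomp h g) v.
Proof. by apply/eqP; rewrite qpi_eq -opprB rpredN ind_rel_tens_rel. Qed.

Lemma ind_map_tens d e (f : Mor C d e) h v :
  ind_map f (ind_tens h v) = ind_tens (hcomp f h) v.
Proof. by rewrite ind_map_qpi pre_ind_map_tens. Qed.

Definition rep_coinv_rel : {vspace gV V} :=
  (\sum_(g : Mor C c c) limg (grho V g - \1%VF))%VS.

Lemma rep_coinv_rel_subid g v : grho V g v - v \in rep_coinv_rel.
Proof.
have -> : grho V g v - v = (grho V g - \1)%VF v by rewrite add_lfunE opp_lfunE id_lfunE.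
exact: (memv_sum_limg (fun g => grho V g - \1)%VF).
Qed.

Definition augment d (x : pre_ind V d) : rep_coinv V := qpi rep_coinv_rel (\sum_h x h).

Lemma augment_is_linear d : linear (@augment d).
Proof.
move=> a x y; rewrite /augment -linearP; congr qpi.
by rewrite scaler_sumr -big_split; apply: eq_bigr => h _; rewrite !ffunE.
Qed.
HB.instance Definition _ d := GRing.isLinear.Build K (pre_ind V d) (rep_coinv V) _
  (@augment d) (@augment_is_linear d).

Lemma augment_tens d (h : Mor C c d) v : augment (tens h v) = qpi rep_coinv_rel v.
Proof. by rewrite /augment sum_tens. Qed.

Lemma augment_rel d x : x \in ind_rel V d -> augment x = 0.
Proof.
move=> x_rel; apply/eqP; rewrite -memv0; apply: ind_rel_lin x_rel => h g v.
rewrite /tens_rel linearB /= !augment_tens memv0 subr_eq0 qpi_eq.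
by rewrite -opprB rpredN rep_coinv_rel_subid.
Qed.

Lemma augment_map d e (f : Mor C d e) x : augment (pre_ind_map f x) = augment x.
Proof.
rewrite {1 2}(pre_ind_sum_tens x) !linear_sum; apply: eq_bigr => h _ /=.
by rewrite pre_ind_map_tens !augment_tens.
Qed.

Definition ind_coinv d : ind V d -> rep_coinv V := qlift (ind_rel V d) (@augment d).

Lemma ind_coinv_is_linear d : linear (@ind_coinv d).
Proof. exact: qlift_is_linear. Qed.
HB.instance Definition _ d := GRing.isLinear.Build K (ind V d) (rep_coinv V) _
  (@ind_coinv d) (@ind_coinv_is_linear d).

Lemma ind_coinv_tens d (h : Mor C c d) v :
  ind_coinv (ind_tens h v) = qpi rep_coinv_rel v.
Proof. by rewrite /ind_coinv (qlift_qpi (@augment_rel d)) /= augment_tens. Qed.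

Lemma ind_coinv_map d e (f : Mor C d e) y : ind_coinv (ind_map f y) = ind_coinv y.
Proof. by rewrite /ind_coinv /ind_map (qlift_qpi (@augment_rel e)) /= augment_map. Qed.

Lemma ind_coinv_surj d : obj_le c d -> forall y, exists x : ind V d, ind_coinv x = y.
Proof.
by case=> h y; exists (ind_tens h (vsval y)); rewrite ind_coinv_tens qpi_vsval.
Qed.

End Induced.

Section InducedKernel.
Variables (C : category) (K : fieldType) (c : Obj C) (V : grep K c).
Hypothesis transitive_aut : forall a b (f g : Mor C a b),
  exists2 s : Mor C b b, is_auto s & hcomp s f = g.

Definition ind_orbit_rel d : {vspace ind V d} :=
  orbit_rel (fun s : Mor C d d => ind_map s).

Lemma ind_tens_orbit d (h h0 : Mor C c d) v :
  ind_tens h v - ind_tens h0 v \in ind_orbit_rel d.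
Proof.
have [s _ <-] := transitive_aut h0 h; rewrite -ind_map_tens.
exact: (orbit_rel_subid (fun s => @ind_map_is_linear C K c V d d s)).
Qed.

Lemma ind_tens_rep_rel d (h0 : Mor C c d) u :
  u \in rep_coinv_rel V -> ind_tens h0 u \in ind_orbit_rel d.
Proof.
apply: memv_sum_limg_lin => g v.
by rewrite add_lfunE opp_lfunE id_lfunE linearB /= ind_tens_grho ind_tens_orbit.
Qed.

Lemma augment_ker d (x : pre_ind V d) :
  augment x = 0 -> qpi (ind_rel V d) x \in ind_orbit_rel d.
Proof.
move=> /eqP; rewrite qpi_eq0 => sum_rel.
case: (pickP (fun _ : Mor C c d => true)) => [h0 _|no_mor]; last first.
  by rewrite (pre_ind_sum_tens x) big_pred0 // linear0 mem0v.
have -> : qpi (ind_rel V d) x =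
    \sum_h (ind_tens h (x h) - ind_tens h0 (x h)) + ind_tens h0 (\sum_h x h).
  rewrite [ind_tens h0 _]linear_sum -big_split {1}(pre_ind_sum_tens x) linear_sum.
  by apply: eq_bigr => h _; rewrite /= subrK.
by rewrite rpredD ?ind_tens_rep_rel // rpred_sum // => h _; apply: ind_tens_orbit.
Qed.

Lemma ind_coinv_ker d (y : ind V d) : ind_coinv y = 0 -> y \in ind_orbit_rel d.
Proof. by rewrite -{2}(qpi_vsval y); apply: augment_ker. Qed.

End InducedKernel.

Section FreeModule.
Variables (C : category) (K : fieldType).
Implicit Types (l : seq (summand C K)) (s : summand C K).

Lemma fmod_map_is_linear l d e (f : Mor C d e) : linear (fmod_map l f).
Proof. by elim: l => [|s l IH] a x y //=; rewrite ind_map_is_linear IH. Qed.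
HB.instance Definition _ l d e f := GRing.isLinear.Build K (fmod l d) (fmod l e) _
  (fmod_map l f) (@fmod_map_is_linear l d e f).

Fixpoint fmod_coinv l d : fmod l d -> rep_coinv_sum l :=
  match l return fmod l d -> rep_coinv_sum l with
  | [::] => fun _ => 0
  | s :: l' => fun x => (ind_coinv x.1, @fmod_coinv l' d x.2)
  end.

Lemma fmod_coinv_is_linear l d : linear (@fmod_coinv l d).
Proof.
elim: l => [|s l IH] a x y /=; first by rewrite scaler0 addr0.
by rewrite ind_coinv_is_linear IH.
Qed.
HB.instance Definition _ l d := GRing.isLinear.Build K (fmod l d) (rep_coinv_sum l) _
  (@fmod_coinv l d) (@fmod_coinv_is_linear l d).

Lemma fmod_coinv_map l d e (f : Mor C d e) x :
  fmod_coinv (fmod_map l f x) = fmod_coinv x.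
Proof. by elim: l x => [|s l IH] x //=; rewrite ind_coinv_map IH. Qed.

Lemma fmod_coinv_rel l d x : x \in coinv_rel l d -> fmod_coinv x = 0.
Proof.
apply: (orbit_rel_invariant (fun g : Mor C d d => @fmod_map_is_linear l d d g)).
exact: fmod_coinv_map.
Qed.

Definition fmod_deg_le l d : Prop :=
  forall s, List.In s l -> \dim {: gV (srep s)} != 0%N -> obj_le (sobj s) d.

Lemma fmod_deg_le_trans l a b : fmod_deg_le l a -> obj_le a b -> fmod_deg_le l b.
Proof.
by move=> deg_le le_ab s sl V_nz; apply: obj_le_trans (deg_le s sl V_nz) le_ab.
Qed.

Lemma fmod_coinv_surj l d :
  fmod_deg_le l d -> forall y, exists x : fmod l d, fmod_coinv x = y.
Proof.
elim: l => [|s l IH] deg_le y /=; first by exists 0; rewrite [y]vect_dim0 ?dimvf.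
case: y => y1 y2; have [x2 <-] := IH (fun s' s'l => deg_le s' (or_intror s'l)) y2.
have [x1 <-] : exists x1 : ind (srep s) d, ind_coinv x1 = y1.
  have [V0|V_nz] := eqVneq (\dim {: gV (srep s)}) 0%N.
    by exists 0; apply/val_inj; rewrite linear0 /= [val y1]vect_dim0.
  exact: ind_coinv_surj (deg_le s (or_introl erefl) V_nz) y1.
by exists ((x1, x2) : fmod (s :: l) d).
Qed.

End FreeModule.

Section FreeModuleKernel.
Variables (C : category) (K : fieldType).
Implicit Types (l : seq (summand C K)) (s : summand C K).
Hypothesis transitive_aut : forall a b (f g : Mor C a b),
  exists2 s : Mor C b b, is_auto s & hcomp s f = g.

Definition fmod_inl s l d (y : ind (srep s) d) : fmod (s :: l) d := (y, 0).
Definition fmod_inr s l d (x : fmod l d) : fmod (s :: l) d := (0, x).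

Lemma fmod_inl_is_linear s l d : linear (@fmod_inl s l d).
Proof. by move=> a x y; apply: (f_equal2 pair) => //=; rewrite scaler0 addr0. Qed.
HB.instance Definition _ s l d := GRing.isLinear.Build K _ (fmod (s :: l) d) _
  (@fmod_inl s l d) (@fmod_inl_is_linear s l d).

Lemma fmod_inr_is_linear s l d : linear (@fmod_inr s l d).
Proof. by move=> a x y; apply: (f_equal2 pair) => //=; rewrite scaler0 addr0. Qed.
HB.instance Definition _ s l d := GRing.isLinear.Build K (fmod l d) (fmod (s :: l) d) _
  (@fmod_inr s l d) (@fmod_inr_is_linear s l d).

Lemma fmod_coinv_ker l d x : fmod_coinv x = 0 -> x \in coinv_rel l d.
Proof.
have fmod_map_lin l' (g : Mor C d d) := @fmod_map_is_linear C K l' d d g.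
elim: l x => [x _ |s l IH [x1 x2] [/(ind_coinv_ker transitive_aut) x1_rel /IH x2_rel]].
  by rewrite [x]vect_dim0 ?mem0v ?dimvf.
have -> : (x1, x2) = fmod_inl l x1 + fmod_inr s x2 by congr pair; rewrite ?addr0 ?add0r.
rewrite rpredD //.
  have ind_map_lin (g : Mor C d d) := @ind_map_is_linear C K _ (srep s) d d g.
  apply: (orbit_rel_map ind_map_lin (fmod_map_lin _)) x1_rel => g y.
  by rewrite /= linear0.
apply: (orbit_rel_map (fmod_map_lin _) (fmod_map_lin _)) x2_rel => g y.
by rewrite /= linear0.
Qed.

End FreeModuleKernel.

Section CoinvariantIso.
Variables (C : category) (K : fieldType) (l : seq (summand C K)).

Definition coinv_iso d : coinv l d -> rep_coinv_sum l :=
  qlift (coinv_rel l d) (@fmod_coinv C K l d).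

Lemma coinv_iso_is_linear d : linear (@coinv_iso d).
Proof. exact: qlift_is_linear. Qed.
HB.instance Definition _ d := GRing.isLinear.Build K (coinv l d) (rep_coinv_sum l) _
  (@coinv_iso d) (@coinv_iso_is_linear d).

Lemma coinv_iso_map d e (f : Mor C d e) x : coinv_iso (coinv_map l f x) = coinv_iso x.
Proof.
rewrite /coinv_iso /coinv_map (qlift_qpi (@fmod_coinv_rel _ _ l e)) /=.
exact: fmod_coinv_map.
Qed.

Hypothesis transitive_aut : forall a b (f g : Mor C a b),
  exists2 s : Mor C b b, is_auto s & hcomp s f = g.

Lemma coinv_iso_inj d : injective (@coinv_iso d).
Proof. exact/qlift_inj/fmod_coinv_ker. Qed.

Lemma coinv_iso_bij d : fmod_deg_le l d -> bijective (@coinv_iso d).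
Proof.
move=> deg_le; apply: linear_bijective (@coinv_iso_inj d) _ => y.
have [x <-] := fmod_coinv_surj deg_le y.
exists (qpi (coinv_rel l d) x).
by rewrite /= /coinv_iso (qlift_qpi (@fmod_coinv_rel _ _ l d)).
Qed.

End CoinvariantIso.

Arguments coinv_iso {C K} l d.

Theorem mainTheorem12 (R : realType) (C : category) (HC : FI_type C)
    (l : seq (summand C R[i])) (c : Obj C)
    (Hdeg : forall s, List.In s l -> \dim {: gV (srep s)} != 0%N -> obj_le (sobj s) c) :
  (forall (d e : Obj C) (f : Mor C d e), injective (coinv_map l f)) /\
  (forall (d e : Obj C) (f : Mor C d e), obj_le c d -> bijective (coinv_map l f)) /\
  (forall d : Obj C, (forall s, List.In s l -> obj_le (sobj s) d) ->
     exists phi : 'Hom(coinv l d, rep_coinv_sum l), bijective phi).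
Proof.
case: HC => _ _ transitive_aut _ _.
have iso_inj d := @coinv_iso_inj C _ l transitive_aut d.
have iso_bij d := @coinv_iso_bij C _ l transitive_aut d.
have iso_map d e (f : Mor C d e) : coinv_iso l d =1 coinv_iso l e \o coinv_map l f.
  by move=> x /=; rewrite coinv_iso_map.
split; [|split].
- move=> d e f; exact: inj_compr (eq_inj (iso_inj d) (iso_map d e f)).
- move=> d e f le_cd.
  have deg_d := fmod_deg_le_trans Hdeg le_cd.
  have deg_e := fmod_deg_le_trans deg_d (inhabits f).
  have [iso_inv iso_invK _] := iso_bij e deg_e.
  apply: (eq_bij (bij_comp (bij_can_bij (iso_bij e deg_e) iso_invK) (iso_bij d deg_d))).
  by move=> x /=; rewrite (iso_map d e f) /= iso_invK.
- move=> d all_le; exists (linfun (coinv_iso l d)).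
  apply: (eq_bij (iso_bij d (fun s sl _ => all_le s sl))).
  by move=> x; rewrite lfunE.
Qed.
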